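(* Let $n\ge 3$ be a multiple of $3$ and let $A\subseteq\mathbb{F}_3^n$ be such that the equation $a+b+c=0$ with $a,b,c\in A$ has no solutions except $a=b=c$. Then $$|A|\le 3\sum_{i=0}^{2n/3}\binom{n}{i}_2-\binom{n}{2n/3}_2 .$$
   Context: $\mathbb{F}_3$ is the field of integers modulo $3$. The trinomial coefficient $\binom{n}{k}_2$ is the coefficient of $x^k$ in $(1+x+x^2)^n$. *)

From HB Require Import structures.
From mathcomp Require Import all_boot all_order all_algebra.
Set Implicit Arguments. Unset Strict Implicit. Unset Printing Implicit Defensive.
Import GRing.Theory Num.Theory.
Local Open Scope ring_scope.

Definition trinom (n k : nat) : int := ((1 + 'X + 'X^2 : {poly int}) ^+ n)`_k.

(** Tao's slice-rank argument.  Enumerate [A] as [v_1, ..., v_m] and consider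
    the tensor [T(i,j,l) = [v_i + v_j + v_l = 0]], which by hypothesis is the
    diagonal tensor.  Over F_3, [[x + y + z = 0] = prod_k (1 - (x_k+y_k+z_k)^2)],
    a polynomial of degree at most [2n] with individual degrees at most 2; so
    with [N = 2n/3] each of its monomials has degree [<= N] in [x], or
    [<= N] in [y], or [< N] in [z].  Contract the third index against a
    vector [h] that kills all monomials of degree [< N] in the [v_l] and has
    at least [m - #{deg < N}] nonzero entries: the contraction is [diag h], and the surviving monomials
    write it as a sum of two matrices of rank at most [#{deg <= N}] each.
    Hence [m <= 2 #{deg <= N} + #{deg < N}], and the number of exponent
    vectors in [{0,1,2}^n] of degree [k] is the trinomial coefficient. *)
From HB Require Import structures.
From mathcomp Require Import all_boot all_order all_algebra.
From mathcomp Require Import zify ring.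
Set Implicit Arguments. Unset Strict Implicit.
Import GRing.Theory Num.Theory.
Local Open Scope ring_scope.

Lemma F3_cases (t : 'F_3) : [\/ t = 0, t = 1 | t = -1].
Proof.
by case: t => [[|[|[|//]]] ?]; [constructor 1|constructor 2|constructor 3]; apply/val_inj.
Qed.

Lemma F3_subr_sqr (t : 'F_3) : 1 - t ^+ 2 = (t == 0)%:R.
Proof. by case: (F3_cases t) => ->; apply/eqP. Qed.

Lemma F3_triple_eq0 (t : 'F_3) : t + t + t = 0.
Proof. by case: (F3_cases t) => ->; apply/eqP. Qed.

Lemma F3_rV_eq0 n (x : 'rV['F_3]_n) : ((x == 0)%:R : 'F_3) = \prod_i (1 - x 0 i ^+ 2).
Proof.
under eq_bigr do rewrite F3_subr_sqr.
have [->|/eqP x_neq0] := eqVneq x 0; first by rewrite big1 // => i _; rewrite mxE.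
have [i /negPf xi_neq0] : exists i, x 0 i != 0.
  apply/existsP; apply: contraT; rewrite negb_exists => /forallP x0.
  by case: x_neq0; apply/matrixP => a b; rewrite ord1 mxE; apply/eqP/negbNE/x0.
by rewrite (bigD1 i) //= xi_neq0 mul0r.
Qed.

(* Over F_3, [1 - (x+y+z)^2 = 1 - x^2 - y^2 - z^2 + xy + yz + xz]; term [t] is
   [tcoef t * x^(xdeg t) * y^(ydeg t) * z^(zdeg t)]. *)
Definition tcoef (t : 'I_7) : 'F_3 := nth 0 [:: 1; -1; -1; -1; 1; 1; 1] t.
Definition xdeg (t : 'I_7) : 'I_3 := nth 0 [:: 0; 2; 0; 0; 1; 0; 1] t.
Definition ydeg (t : 'I_7) : 'I_3 := nth 0 [:: 0; 0; 2; 0; 1; 1; 0] t.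
Definition zdeg (t : 'I_7) : 'I_3 := nth 0 [:: 0; 0; 0; 2; 0; 1; 1] t.

Lemma F3_subr_sqr_expand (x y z : 'F_3) :
  1 - (x + y + z) ^+ 2 = \sum_(t < 7) tcoef t * x ^+ xdeg t * y ^+ ydeg t * z ^+ zdeg t.
Proof.
rewrite !big_ord_recr big_ord0 /=.
by case: (F3_cases x) => ->; case: (F3_cases y) => ->; case: (F3_cases z) => ->; apply/eqP.
Qed.

Lemma deg_term_le2 (t : 'I_7) : (xdeg t + ydeg t + zdeg t <= 2)%N.
Proof. by case: t => [[|[|[|[|[|[|[|//]]]]]]] ?]. Qed.

Section Monomials.
Variable n : nat.

Definition mdeg (a : {ffun 'I_n -> 'I_3}) : nat := (\sum_i (a i : nat))%N.
Definition monomial (a : {ffun 'I_n -> 'I_3}) (x : 'rV['F_3]_n) : 'F_3 :=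
  \prod_i x 0 i ^+ a i.

(* Expanding the product over the coordinates of [1 - (x_k+y_k+z_k)^2]
   chooses one of the seven terms for each coordinate [k]. *)
Definition xexps (f : {ffun 'I_n -> 'I_7}) := [ffun i => xdeg (f i)].
Definition yexps (f : {ffun 'I_n -> 'I_7}) := [ffun i => ydeg (f i)].
Definition zexps (f : {ffun 'I_n -> 'I_7}) := [ffun i => zdeg (f i)].
Definition coefs (f : {ffun 'I_n -> 'I_7}) : 'F_3 := \prod_i tcoef (f i).

Lemma mdeg_exps_le (f : {ffun 'I_n -> 'I_7}) :
  (mdeg (xexps f) + mdeg (yexps f) + mdeg (zexps f) <= 2 * n)%N.
Proof.
rewrite /mdeg -!big_split /= -[n in (2 * n)%N]card_ord mulnC -sum_nat_const.
by apply: leq_sum => i _; rewrite !ffunE deg_term_le2.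
Qed.

Lemma F3_sum3_eq0 (x y z : 'rV['F_3]_n) :
  ((x + y + z == 0)%:R : 'F_3) =
  \sum_f coefs f * monomial (xexps f) x * monomial (yexps f) y * monomial (zexps f) z.
Proof.
rewrite F3_rV_eq0; under eq_bigr do rewrite !mxE F3_subr_sqr_expand.
rewrite bigA_distr_bigA /=; apply: eq_bigr => f _.
by rewrite /coefs /monomial -!big_split /=; apply: eq_bigr => i _; rewrite !ffunE.
Qed.

Lemma trinom_card k : trinom n k = #|[set a | mdeg a == k]|%:R.
Proof.
rewrite /trinom; have -> : (1 + 'X + 'X^2 : {poly int}) = \sum_(j < 3) 'X^j.
  by rewrite !big_ord_recr big_ord0 /= add0r expr0 expr1.
rewrite -[n in _ ^+ n]card_ord -prodr_const bigA_distr_bigA coef_sum /=.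
under eq_bigr do rewrite prodrXr coefXn.
rewrite -sumr_const [RHS]big_mkcond; apply: eq_bigr => a _.
by rewrite inE /mdeg eq_sym; case: (_ == _).
Qed.

Lemma card_mdeg_lt M : #|[set a | (mdeg a < M)%N]|%:R = \sum_(k < M) trinom n k.
Proof.
elim: M => [|M IH].
  rewrite big_ord0; apply/eqP; rewrite pnatr_eq0 cards_eq0.
  by apply/eqP/setP => a; rewrite !inE.
rewrite big_ord_recr /= -IH trinom_card -natrD -!sum1_card.
rewrite (bigID (fun a => mdeg a < M)%N) /=.
by congr ((_ + _)%:R); apply: eq_bigl => a; rewrite !inE ltnS; case: ltngtP.
Qed.

End Monomials.

Lemma mxrank_sum_outer (R : fieldType) m p (I : finType) (S : {set I})
    (u : I -> 'cV[R]_m) (w : I -> 'rV[R]_p) :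
  (\rank (\sum_(i in S) u i *m w i)%R <= #|S|)%N.
Proof.
rewrite -sum1_card; apply: (big_ind2 (fun M k => \rank M <= k)%N).
- by rewrite mxrank0.
- by move=> M1 k1 M2 k2 ? ?; apply: leq_trans (mxrank_add _ _) _; apply: leq_add.
- by move=> i _; apply: leq_trans (mxrankM_maxl _ _) _; apply: rank_leq_col.
Qed.

Lemma mxrank_sum_keyed (R : fieldType) m p (I K : finType) (P : pred I)
    (S : {set K}) (key : I -> K) (u : K -> 'I_m -> R) (w : I -> 'I_p -> R) :
  (forall f, P f -> key f \in S) ->
  (\rank (\matrix_(i, j) \sum_(f | P f) u (key f) i * w f j)%R <= #|S|)%N.
Proof.
move=> PS.
have -> : \matrix_(i, j) \sum_(f | P f) u (key f) i * w f j =
    \sum_(k in S) (\col_i u k i) *m (\row_j \sum_(f | P f && (key f == k)) w f j).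
  apply/matrixP => i j; rewrite mxE summxE (partition_big key (mem S)) //=.
  apply: eq_bigr => k _; rewrite !mxE big_ord1 !mxE mulr_sumr.
  by apply: eq_bigr => f /andP[_ /eqP <-].
exact: mxrank_sum_outer.
Qed.

(* The rows of [row_base K] restricted to some [\rank K] columns form an
   invertible matrix; the combination of them equal to 1 on those columns
   has a [\rank K]-dimensional identity block in its diagonal matrix. *)
Lemma exists_submx_diag_rank (R : fieldType) m s (K : 'M[R]_(m, s)) :
  exists2 h : 'rV_s, (h <= K)%MS & (\rank K <= \rank (diag_mx h))%N.
Proof.
set B := row_base K.
have fT : row_full B^T by rewrite /row_full mxrank_tr; apply: row_base_free.
set f := fullrankfun fT.
have Bf : colsub f B = (rowsub f B^T)^T by apply/matrixP => i j; rewrite !mxE.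
have Bf_unit : colsub f B \in unitmx by rewrite Bf unitmx_tr fullrowsub_unit.
set h := (const_mx 1 : 'rV[R]_(\rank K)) *m invmx (colsub f B) *m B.
have hf a : h 0 (f a) = 1.
  have : colsub f h = const_mx 1 by rewrite -mulmx_colsub -mulmxA mulVmx ?mulmx1.
  by move/matrixP/(_ 0 a); rewrite !mxE.
exists h; first by rewrite (submx_trans (submxMl _ _)) ?eq_row_base.
have -> : \rank K = \rank (rowsub f (colsub f (diag_mx h))).
  have -> : rowsub f (colsub f (diag_mx h)) = 1%:M.
    apply/matrixP => a b; rewrite 2!mxE [diag_mx h _ _]mxE hf mxE.
    by rewrite (inj_eq (@fullrankfun_inj _ _ _ _ fT)); case: (a == b).
  by rewrite mxrank1.
rewrite (leq_trans (mxrankS (rowsub_sub _ _))) //.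
have -> : colsub f (diag_mx h) = diag_mx h *m colsub f 1%:M by rewrite mulmx_colsub mulmx1.
exact: mxrankM_maxl.
Qed.

Section SliceRankBound.
Variables (n m N : nat) (v : 'I_m -> 'rV['F_3]_n).
Hypothesis v_sum3_eq0 : forall i j l, v i + v j + v l = 0 -> i = j /\ j = l.
Hypothesis deg_bound : (2 * n <= 3 * N)%N.

Let low := [set a : {ffun 'I_n -> 'I_3} | (mdeg a < N)%N].
Let mid := [set a : {ffun 'I_n -> 'I_3} | (mdeg a <= N)%N].

Definition moment (h : 'rV['F_3]_m) (a : {ffun 'I_n -> 'I_3}) :=
  \sum_l monomial a (v l) * h 0 l.

Lemma v_sum3_eq0E i j l : (v i + v j + v l == 0) = (i == j) && (j == l).
Proof.
apply/eqP/andP => [/v_sum3_eq0[-> ->] | [/eqP <- /eqP <-]]; first by [].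
by apply/matrixP => a b; rewrite !mxE F3_triple_eq0.
Qed.

Lemma diag_mx_expand h i j :
  diag_mx h i j = \sum_f coefs f * monomial (xexps f) (v i) *
                    monomial (yexps f) (v j) * moment h (zexps f).
Proof.
transitivity (\sum_l (v i + v j + v l == 0)%:R * h 0 l).
  rewrite mxE; have [<-|ij] := eqVneq i j; last first.
    by rewrite mulr0n big1 // => l _; rewrite v_sum3_eq0E (negPf ij) mul0r.
  rewrite (bigD1 i) //= v_sum3_eq0E eqxx mul1r mulr1n big1 ?addr0 // => l li.
  by rewrite v_sum3_eq0E [i == l]eq_sym (negPf li) andbF mul0r.
under eq_bigr do rewrite F3_sum3_eq0 mulr_suml.
rewrite exchange_big; apply: eq_bigr => f _; rewrite /moment mulr_sumr.
by apply: eq_bigr => l _; rewrite !mulrA.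
Qed.

Lemma mxrank_diag_mx_le h :
  (forall a, (mdeg a < N)%N -> moment h a = 0) -> (\rank (diag_mx h) <= 2 * #|mid|)%N.
Proof.
move=> h_low.
pose Mx := \matrix_(i, j) \sum_(f | xexps f \in mid) monomial (xexps f) (v i) *
  (coefs f * monomial (yexps f) (v j) * moment h (zexps f)).
pose My := \matrix_(j, i) \sum_(f | (yexps f \in mid) && (xexps f \notin mid))
  monomial (yexps f) (v j) * (coefs f * monomial (xexps f) (v i) * moment h (zexps f)).
have -> : diag_mx h = Mx + My^T.
  apply/matrixP => i j; rewrite diag_mx_expand !mxE (bigID (fun f => xexps f \in mid)) /=.
  congr (_ + _); first by apply: eq_bigr => f _; ring.
  rewrite (bigID (fun f => yexps f \in mid)) /= [X in _ + X]big1 ?addr0 => [|f].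
    by apply: eq_big => [f|f _]; [rewrite andbC | ring].
  rewrite !inE -!ltnNge => /andP[highx highy]; rewrite h_low ?mulr0 //.
  by have := mdeg_exps_le f; lia.
rewrite mul2n -addnn (leq_trans (mxrank_add _ _)) // mxrank_tr leq_add //.
  exact: (mxrank_sum_keyed (fun a i => monomial a (v i))).
by apply: (mxrank_sum_keyed (fun a i => monomial a (v i))) => f /andP[].
Qed.

Lemma exists_low_annihilator : exists2 h,
  forall a, (mdeg a < N)%N -> moment h a = 0 & (m - #|low| <= \rank (diag_mx h))%N.
Proof.
pose C := \matrix_(l < m, k < #|low|) monomial (enum_val k) (v l).
have [h /sub_kermxP hC rk] := exists_submx_diag_rank (kermx C).
exists h => [a a_low|]; last first.
  by rewrite (leq_trans _ rk) // mxrank_ker leq_sub2l // rank_leq_col.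
have a_in : a \in low by rewrite inE.
move/matrixP/(_ 0 (enum_rank_in a_in a)): hC; rewrite !mxE => <-.
by apply: eq_bigr => l _; rewrite mxE enum_rankK_in // mulrC.
Qed.

Lemma slice_rank_bound : (m <= 2 * #|mid| + #|low|)%N.
Proof.
have [h /mxrank_diag_mx_le rk_le rk_ge] := exists_low_annihilator.
by move: (leq_trans rk_ge rk_le); lia.
Qed.

End SliceRankBound.

Theorem mainTheorem6 (n : nat) (hn3 : (3 <= n)%N) (hdiv : (3 %| n)%N)
    (A : {set 'rV['F_3]_n})
    (hA : forall a b c : 'rV['F_3]_n, a \in A -> b \in A -> c \in A ->
            a + b + c = 0 -> a = b /\ b = c) :
  (#|A|%:Z <= 3 * (\sum_(i < (2 * n %/ 3).+1) trinom n i) - trinom n (2 * n %/ 3))%R.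
Proof.
set N := (2 * n %/ 3)%N.
have deg_bound : (2 * n <= 3 * N)%N.
  by case/dvdnP: hdiv => q n_eq; rewrite /N n_eq mulnA mulnK // mulnC.
have enum_sum3_eq0 (i j l : 'I_#|A|) :
    enum_val i + enum_val j + enum_val l = 0 -> i = j /\ j = l.
  case/(hA _ _ _ (enum_valP i) (enum_valP j) (enum_valP l)).
  by move=> /enum_val_inj -> /enum_val_inj ->.
have := slice_rank_bound enum_sum3_eq0 deg_bound.
rewrite -lez_nat -!natz !(natrD, natrM) (card_mdeg_lt n N.+1) card_mdeg_lt.
rewrite big_ord_recr /=; set s := \sum_(i < N) _; set t := trinom n N.
by have -> : 3 * (s + t) - t = 2 * (s + t) + s by ring.
Qed.
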